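(* Let $g$ and $k$ be positive integers, let $G=(A,B;E)$ be a bipartite graph with girth at least $2g$, and let $H$ be a bipartite graph with vertex classes $A$ and $[k]$. Suppose that $H$ contains no cycle $u_1,\ell_1,\dots,u_h,\ell_h$ with $u_1,\dots,u_h\in A$, $\ell_1,\dots,\ell_h\in[k]$ for some $h<g$ such that $u_1,\dots,u_h$ have a common neighbor in $G$. Then $G\otimes_H k$ has girth at least $2g$.
   Context: For a bipartite graph $G=(A,B;E)$ and positive integer $k$, $G\otimes k$ is the bipartite graph with vertex classes $A\times[k]$ and $(B\times[k])\cup A'$, where $A'$ is a disjoint copy of $A$; $(u,i)\in A\times[k]$ and $(v,j)\in B\times[k]$ are adjacent iff $i=j$ and $\{u,v\}\in E$; $(u,i)\in A\times[k]$ and $v\in A'$ are adjacent iff $v$ is the copy of $u$; there are no other edges. For a bipartite graph $H$ with vertex classes $A$ and $[k]$, $G\otimes_H k$ is the induced subgraph of $G\otimes k$ obtained by keeping all vertices of $(B\times[k])\cup A'$ and only those vertices $(u,i)\in A\times[k]$ with $\{u,i\}\in E(H)$. The girth of a graph is the length of its shortest cycle. *)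

From mathcomp Require Import all_boot.
Set Implicit Arguments. Unset Strict Implicit. Unset Printing Implicit Defensive.

Definition is_cycle (V : eqType) (adj : rel V) (c : seq V) : bool :=
  [&& 3 <= size c, uniq c & cycle adj c].

Definition girth_ge (V : eqType) (adj : rel V) (m : nat) : Prop :=
  forall c : seq V, is_cycle adj c -> m <= size c.

Definition bip_adj (X Y : Type) (E : X -> Y -> bool) : rel (X + Y) :=
  fun x y => match x, y with
             | inl a, inr b => E a b
             | inr b, inl a => E a b
             | _, _ => false
             end.

(* Vertex set of G (x) k : A x [k]  and  (B x [k]) U A'. *)
Definition tvert (A B : finType) (k : nat) : finType :=
  ((A * 'I_k) + ((B * 'I_k) + A))%type.

Definition tensor_adj (A B : finType) (E : A -> B -> bool) (k : nat)
  : rel (tvert A B k) :=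
  fun x y => match x, y with
             | inl (u, i), inr (inl (v, j)) => (i == j) && E u v
             | inr (inl (v, j)), inl (u, i) => (i == j) && E u v
             | inl (u, _), inr (inr w) => u == w
             | inr (inr w), inl (u, _) => u == w
             | _, _ => false
             end.

Definition tkeep (A B : finType) (k : nat) (H : A -> 'I_k -> bool)
  (x : tvert A B k) : bool :=
  match x with
  | inl (u, i) => H u i
  | inr _ => true
  end.

Definition tensorH_adj (A B : finType) (E : A -> B -> bool) (k : nat)
  (H : A -> 'I_k -> bool) : rel {x : tvert A B k | tkeep H x} :=
  fun x y => tensor_adj E (val x) (val y).

Definition leftverts (X Y : Type) (c : seq (X + Y)) : seq X :=
  pmap (fun z => match z with inl a => Some a | inr _ => None end) c.

From mathcomp Require Import all_boot zify.
Set Implicit Arguments. Unset Strict Implicit. Unset Printing Implicit Defensive.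

(* Contracting, for every u in A, the star formed by its copy in A' and the
   vertices (u, i) maps a cycle of G (x)_H k to a closed non-backtracking walk, hence
   to a cycle of no greater length, in the bipartite graph on A and B x [k] with
   u ~ (v, j) iff uv in E(G) and uj in E(H). Projecting a cycle c of length < 2g of
   that graph to G gives a closed walk below the girth whose A-vertices are distinct;
   removing its backtracks one by one shows that it visits a single vertex v of B.
   Hence projecting c to H is injective: it yields a cycle of H of the same length
   whose A-vertices are all adjacent to v, which the hypothesis forbids. *)

Section ClosedWalks.

Variables (V : eqType) (r : rel V).

Lemma cycle_nthP (x0 : V) (c : seq V) :
  reflect (forall i, i < size c -> r (nth x0 c i) (nth x0 c (i.+1 %% size c)))
          (cycle r c).
Proof.
case: c => [|x p]; first by constructor.
have nth_closed i : i < (size p).+1 ->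
    nth x0 (x :: rcons p x) i = nth x0 (x :: p) i /\
    nth x0 (rcons p x) i = nth x0 (x :: p) (i.+1 %% (size p).+1).
  move=> ip; rewrite -rcons_cons !nth_rcons /= ip; split=> //.
  case: (ltngtP i (size p)) ip => [lt _ | gt | -> _].
  - by rewrite modn_small.
  - lia.
  - by rewrite modnn.
apply: (iffP (pathP x0)); rewrite size_rcons => walk i ip;
  have [e1 e2] := nth_closed i ip.
- by rewrite -e1 -e2 walk.
- by rewrite e1 e2 walk.
Qed.

Lemma cycle_nth_mod (x0 : V) (c : seq V) i : cycle r c -> 0 < size c ->
  r (nth x0 c (i %% size c)) (nth x0 c (i.+1 %% size c)).
Proof.
move=> /(cycle_nthP x0) walk c0.
by have := walk _ (ltn_pmod i c0); rewrite -addn1 modnDml addn1.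
Qed.

Lemma nonbacktracking_walk_cycle (F : nat -> V) (s : seq V) :
  irreflexive r -> (forall i, r (F i) (F i.+1)) -> (forall i, F i != F i.+2) ->
  (forall i, F i \in s) -> exists2 c, is_cycle r c & size c <= size s.
Proof.
move=> irr walk nb Fs.
suff [c cc cs] : exists2 c, is_cycle r c & {subset c <= s}.
  by exists c => //; apply: uniq_leq_size cs; case/and3P: cc.
have [a [b [ab Fab]]] : exists a b, a < b /\ F a = F b.
  have : ~~ uniq (mkseq F (size s).+1).
    apply/negP => /uniq_leq_size le.
    have /le : {subset mkseq F (size s).+1 <= s} by move=> _ /mapP [i _ ->].
    by rewrite size_mkseq ltnn.
  case/(uniqPn (F 0)) => a [b [ab]]; rewrite size_mkseq => bs.
  by rewrite !nth_mkseq // ?(ltn_trans ab) // => Fab; exists a, b.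
have [d d0] : exists2 d, 0 < d & F a = F (a + d).
  by exists (b - a); [lia | rewrite Fab; congr F; lia].
elim/ltn_ind: d a {b ab Fab} d0 => d IH a d0 Fad.
set c := mkseq (fun t => F (a + t)) d.
have cs : {subset c <= s} by move=> _ /mapP [t _ ->].
case: (boolP (uniq c)) => [uc|].
- exists c => //; rewrite /is_cycle size_mkseq uc /=; apply/andP; split.
  + case: d d0 Fad {IH c cs uc} => [|[|[|d]]] // _.
    * by rewrite addn1 => Fa; move: (walk a); rewrite -Fa irr.
    * by rewrite addn2 => /eqP; rewrite (negbTE (nb a)).
  + apply/(cycle_nthP (F a)) => t; rewrite size_mkseq => td.
    rewrite !nth_mkseq ?ltn_pmod //.
    have [lt|ge] := ltnP t.+1 d; first by rewrite modn_small // addnS.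
    have td1 : t.+1 = d by lia.
    by rewrite td1 modnn addn0 Fad -td1 addnS.
- case/(uniqPn (F a)) => t [t' [tt']]; rewrite size_mkseq => t'd.
  rewrite !nth_mkseq ?(ltn_trans tt') // => Ftt'.
  by apply: (IH (t' - t) _ (a + t)); [lia | lia | rewrite Ftt'; congr F; lia].
Qed.

End ClosedWalks.

Lemma nth_rot (T : Type) (x0 : T) (s : seq T) i j :
  i <= size s -> j < size s -> nth x0 (rot i s) j = nth x0 s ((i + j) %% size s).
Proof.
move=> hi hj; rewrite /rot nth_cat size_drop; case: ltnP => h.
- by rewrite nth_drop modn_small //; lia.
- rewrite nth_take; last by lia.
  have -> : i + j = (i + j - size s) + size s by lia.
  by rewrite modnDr modn_small; [congr nth; lia | lia].
Qed.

Definition map_inr (X Y Z : Type) (f : Y -> Z) (x : X + Y) : X + Z :=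
  match x with inl u => inl u | inr y => inr (f y) end.

Lemma leftverts_map_inr (X Y Z : Type) (f : Y -> Z) (c : seq (X + Y)) :
  leftverts (map (map_inr f) c) = leftverts c.
Proof. by elim: c => //= -[u|y] c ->. Qed.

Lemma cycle_map_inr (X Y Z : Type) (R : X -> Y -> bool) (S : X -> Z -> bool)
    (f : Y -> Z) (c : seq (X + Y)) :
  (forall u y, R u y -> S u (f y)) ->
  cycle (bip_adj R) c -> cycle (bip_adj S) (map (map_inr f) c).
Proof.
by move=> RS; rewrite cycle_map; apply: sub_cycle => -[u|y] [u'|y'] //=; apply: RS.
Qed.

Lemma bip_adj_irr (X Y : Type) (E : X -> Y -> bool) : irreflexive (bip_adj E).
Proof. by case. Qed.

Lemma mem_leftverts (X Y : eqType) (c : seq (X + Y)) u :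
  (u \in leftverts c) = (inl u \in c).
Proof. by elim: c => //= -[u'|y] c IH; rewrite ?inE IH. Qed.

Lemma cycle_backtrack (T : Type) (e : rel T) a b s :
  cycle e [:: a, b, a & s] -> cycle e (a :: s).
Proof. by case/andP=> _ /andP []. Qed.

Lemma short_closed_walk_inr_eq (X Y : eqType) (E : X -> Y -> bool) m
    (w : seq (X + Y)) :
  girth_ge (bip_adj E) m -> cycle (bip_adj E) w -> size w < m ->
  uniq (leftverts w) -> forall y y', inr y \in w -> inr y' \in w -> y = y'.
Proof.
move=> girth; have [n] := ubnP (size w); elim: n w => // n IH w /ltnSE wn.
move=> cw wm uw y y' yw y'w.
have [w2|w3] := leqP (size w) 2.
  case: w w2 cw yw y'w {IH wn wm uw} => [|z1 [|z2 [|//]]] //= _.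
  - by rewrite andbT bip_adj_irr.
  - rewrite !inE andbT => /andP [e12 _].
    by case/orP => /eqP ey; case/orP => /eqP ey'; subst; [case: ey'| | |case: ey'].
have w0 : 0 < size w by lia.
pose F i := nth (inr y) w (i %% size w).
have walk i : bip_adj E (F i) (F i.+1) := cycle_nth_mod _ i cw w0.
have FmodS i j : F (i %% size w + j) = F (i + j) by rewrite /F modnDml.
case: (boolP (has (fun i => F i == F i.+2) (iota 0 (size w)))).
- case/hasP=> i; rewrite mem_iota /= => iw /eqP Fi.
  have rotF j : j < size w -> nth (inr y) (rot i w) j = F (i + j).
    by move=> jw; rewrite nth_rot // ltnW.
  have [a [b [s ew']]] : exists a b s, rot i w = [:: a, b, a & s].
    have := rotF 2 w3; have := rotF 0 w0; rewrite addn0 addn2 -Fi.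
    move: w3; rewrite -(size_rot i w).
    by case: (rot i w) => [|a [|b [|a' s]]] //= _ <- ->; exists a, b, s.
  have cw' : cycle (bip_adj E) [:: a, b, a & s] by rewrite -ew' rot_cycle.
  have uw' : uniq (leftverts [:: a, b, a & s]).
    have rotw : perm_eq (rot i w) w by rewrite perm_rot.
    by rewrite -ew' (perm_uniq (perm_pmap _ rotw)).
  have mw' z : (z \in [:: a, b, a & s]) = (z \in w) by rewrite -ew' mem_rot.
  have sw' : size s + 3 = size w by rewrite -(size_rot i w) ew' /=; lia.
  case: a cw' uw' mw' {ew'} => [u|v] cw' uw' mw'.
    by move: uw'; case: b {cw' mw'} => [u'|v'] /=; rewrite !inE eqxx ?orbT.
  case: b cw' uw' mw' => [u|v'] cw' uw' mw'; last by case/andP: cw'.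
  have ws z : inr z \in w -> inr z \in inr v :: s.
    by rewrite -mw' !inE => /or4P [->|/eqP//|->|->]; rewrite ?orbT.
  apply: (IH (inr v :: s)); rewrite ?(cycle_backtrack cw') ?ws //=; [lia | lia |].
  by case/andP: uw'.
- move/hasPn=> nobt.
  have nb i : F i != F i.+2.
    have := nobt (i %% size w); rewrite mem_iota add0n ltn_pmod // => /(_ isT).
    by rewrite -addn2 FmodS addn2 -{1}[i %% _]addn0 FmodS addn0.
  have Fw i : F i \in w by rewrite mem_nth // ltn_pmod.
  have [c cc cw'] := nonbacktracking_walk_cycle (@bip_adj_irr _ _ E) walk nb Fw.
  by have := girth c cc; rewrite leqNgt (leq_ltn_trans cw' wm).
Qed.

Definition bip_prod (A B K : Type) (E : A -> B -> bool) (H : A -> K -> bool)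
    (u : A) (vj : B * K) : bool :=
  E u vj.1 && H u vj.2.

Lemma bip_prod_girth (A B K : eqType) (E : A -> B -> bool) (H : A -> K -> bool) m :
  girth_ge (bip_adj E) m ->
  (forall c : seq (A + K), is_cycle (bip_adj H) c -> size c < m ->
     ~ (exists b : B, forall u, u \in leftverts c -> E u b)) ->
  girth_ge (bip_adj (bip_prod E H)) m.
Proof.
move=> girthE noH c /and3P [c3 uc cc]; rewrite leqNgt; apply/negP => cm.
have cG : cycle (bip_adj E) (map (map_inr fst) c).
  by apply: cycle_map_inr cc => u vj /andP [].
have cH : cycle (bip_adj H) (map (map_inr snd) c).
  by apply: cycle_map_inr cc => u vj /andP [].
have same_v vj vj' : inr vj \in c -> inr vj' \in c -> vj.1 = vj'.1.
  move=> vjc vj'c; apply: (short_closed_walk_inr_eq girthE cG).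
  - by rewrite size_map.
  - by rewrite leftverts_map_inr; apply: pmap_uniq uc => -[].
  - exact: (map_f (map_inr fst) vjc).
  - exact: (map_f (map_inr fst) vj'c).
have adj_next u : inl u \in c -> exists2 vj, inr vj \in c & bip_prod E H u vj.
  move=> uc'; have := next_cycle cc uc'; have := mem_next c (inl u); rewrite uc'.
  by case: (next c (inl u)) => [//|vj] vjc R; exists vj.
have [vj0 vj0c] : exists vj, inr vj \in c.
  case: c c3 {uc cc cm cG cH same_v} adj_next => [//|[u|vj] c] _ adj_next.
  - by have [vj vjc _] := adj_next u (mem_head _ _); exists vj.
  - by exists vj; rewrite mem_head.
apply: (noH (map (map_inr snd) c)).
- rewrite /is_cycle size_map c3 cH andbT map_inj_in_uniq //.
  move=> [u|[v j]] [u'|[v' j']] //= xc yc [eq]; first by rewrite eq.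
  by have /= <- := same_v _ _ xc yc; rewrite eq.
- by rewrite size_map.
- exists vj0.1 => u; rewrite leftverts_map_inr mem_leftverts => uc'.
  have [vj vjc /andP [Euv _]] := adj_next u uc'.
  by rewrite (same_v vj0 vj).
Qed.

Section StarContraction.

Variables (A B : finType) (k : nat) (E : A -> B -> bool) (H : A -> 'I_k -> bool).

Definition is_copy (x : tvert A B k) : bool :=
  if x is inr (inr _) then true else false.
Definition is_Bvertex (x : tvert A B k) : bool :=
  if x is inr (inl _) then true else false.

Definition contract (x : tvert A B k) : A + (B * 'I_k) :=
  match x with
  | inl (u, _) => inl u
  | inr (inl vj) => inr vj
  | inr (inr u) => inl u
  end.

Variables (n : nat) (f : nat -> tvert A B k).
Hypotheses (n_gt0 : 0 < n) (f_periodic : forall i, f (i %% n) = f i)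
  (f_adj : forall i, tensor_adj E (f i) (f i.+1)) (f_keep : forall i, tkeep H (f i))
  (f_nb : forall i, f i != f i.+2).

(* For [f p] not a copy vertex, the first later position whose contraction
   differs from that of [p]. *)
Definition next_pos (p : nat) : nat :=
  if is_Bvertex (f p) || is_Bvertex (f p.+1) then p.+1 else p.+3.

Variant next_pos_spec (p : nat) : nat -> Prop :=
  | NextFromB u v j of f p = inr (inl (v, j)) & f p.+1 = inl (u, j)
      & bip_prod E H u (v, j) : next_pos_spec p p.+1
  | NextToB u v j of f p = inl (u, j) & f p.+1 = inr (inl (v, j))
      & bip_prod E H u (v, j) : next_pos_spec p p.+1
  | NextViaCopy u v j j' of f p = inl (u, j) & f p.+1 = inr (inr u)
      & f p.+2 = inl (u, j') & f p.+3 = inr (inl (v, j'))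
      & bip_prod E H u (v, j') : next_pos_spec p p.+3.

Lemma next_posP p : ~~ is_copy (f p) -> next_pos_spec p (next_pos p).
Proof.
rewrite /next_pos => ncp.
have a0 := f_adj p; have a1 := f_adj p.+1; have a2 := f_adj p.+2.
have k0 := f_keep p; have k1 := f_keep p.+1; have k2 := f_keep p.+2.
have nb1 := f_nb p.+1.
case Ep: (f p) ncp a0 k0 => [[u j]|[[v j]|//]] _ a0 k0.
- case E1: (f p.+1) a0 a1 nb1 => [//|[[v j1]|w]] /= a0 a1 nb1.
    case/andP: a0 => /eqP Ej Euv; rewrite -Ej in E1.
    by apply: NextToB Ep E1 _; rewrite /bip_prod Euv.
  move/eqP: a0 a1 E1 nb1 => <- a1 E1 nb1.
  case E2: (f p.+2) a1 a2 k2 => [[u2 j2]|//] /= /eqP Eu a2 k2; rewrite Eu in E2 a2 k2.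
  case E3: (f p.+3) a2 nb1 => [//|[[v j3]|w3]] /= a2 nb1.
    case/andP: a2 => /eqP Ej Euv; rewrite -Ej in E3.
    by apply: NextViaCopy Ep E1 E2 E3 _; rewrite /bip_prod Euv.
  by move/eqP: a2 nb1 => <-; rewrite eqxx.
- case E1: (f p.+1) a0 k1 => [[u j1]|//] /= a0 k1.
  case/andP: a0 => /eqP Ej Euv; rewrite Ej in E1 k1.
  by apply: NextFromB Ep E1 _; rewrite /bip_prod Euv.
Qed.

Lemma next_pos_noncopy p : ~~ is_copy (f p) -> ~~ is_copy (f (next_pos p)).
Proof. by case/next_posP=> [u v j _ -> | u v j _ -> | u v j j' _ _ _ ->]. Qed.

Lemma contract_next_pos p : ~~ is_copy (f p) ->
  bip_adj (bip_prod E H) (contract (f p)) (contract (f (next_pos p))).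
Proof. by case/next_posP=> [u v j -> -> | u v j -> -> | u v j j' -> _ _ ->]. Qed.

Lemma contract_next_pos2 p : ~~ is_copy (f p) ->
  contract (f p) != contract (f (next_pos (next_pos p))).
Proof.
move=> ncp; have := next_pos_noncopy ncp.
have nb i : f i <> f i.+2 by apply/eqP.
(* each case either mixes up vertex kinds or makes f backtrack *)
case: (next_posP ncp) => [u v j Ep E1 _ | u v j Ep E1 _ | u v j j' Ep E1 E2 E3 _] ncp';
  case: (next_posP ncp') => [u' v' i F1 F2 _ | u' v' i F1 F2 _ | ? ? ? ? F1 F2 F3 F4 _];
  by apply/eqP; rewrite ?Ep ?F2 ?F4 /=; congruence.
Qed.

Lemma exists_noncopy : exists p, ~~ is_copy (f p).
Proof.
case E0: (f 0) => [?|[?|w]]; try by exists 0; rewrite E0.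
have := f_adj 0; rewrite E0; case E1: (f 1) => [?|//] _.
by exists 1; rewrite E1.
Qed.

Lemma contracted_cycle :
  exists2 c, is_cycle (bip_adj (bip_prod E H)) c & size c <= n.
Proof.
have [p0 np0] := exists_noncopy.
pose pos i := iter i next_pos p0.
have npos i : ~~ is_copy (f (pos i)) by elim: i => //= i; apply: next_pos_noncopy.
pose s := [seq contract (f p) | p <- iota 0 n].
have in_s i : contract (f (pos i)) \in s.
  by rewrite -f_periodic; apply: map_f; rewrite mem_iota ltn_pmod.
have [c cc cs] := nonbacktracking_walk_cycle (@bip_adj_irr _ _ _)
  (fun i => contract_next_pos (npos i)) (fun i => contract_next_pos2 (npos i)) in_s.
by exists c; rewrite // -(size_iota 0 n) -(size_map (contract \o f)).
Qed.

End StarContraction.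

Lemma tensorH_contract_cycle (A B : finType) (k : nat) (E : A -> B -> bool)
    (H : A -> 'I_k -> bool) (C : seq {x : tvert A B k | tkeep H x}) :
  is_cycle (@tensorH_adj A B E k H) C ->
  exists2 c, is_cycle (bip_adj (bip_prod E H)) c & size c <= size C.
Proof.
case: C => [//|x0 C] /and3P [C3 uC cC].
set n := size (x0 :: C); have n0 : 0 < n by [].
pose f i := val (nth x0 (x0 :: C) (i %% n)).
have f_periodic i : f (i %% n) = f i by rewrite /f modn_mod.
have f_adj i : tensor_adj E (f i) (f i.+1) := cycle_nth_mod x0 i cC n0.
have f_keep i : tkeep H (f i) by apply: valP.
have f_nb i : f i != f i.+2.
  rewrite /f (inj_eq val_inj) nth_uniq ?ltn_pmod //.
  by rewrite -addn2 -{1}[i]addn0 eqn_modDl mod0n modn_small.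
exact: contracted_cycle n0 f_periodic f_adj f_keep f_nb.
Qed.

Unset Implicit Arguments.

Theorem lemma5p5 (g k : nat) (A B : finType) (E : A -> B -> bool)
    (H : A -> 'I_k -> bool) :
  0 < g -> 0 < k ->
  girth_ge (bip_adj E) (2 * g) ->
  (forall c : seq (A + 'I_k), is_cycle (bip_adj H) c -> size c < 2 * g ->
     ~ (exists b : B, forall u, u \in leftverts c -> E u b)) ->
  girth_ge (@tensorH_adj A B E k H) (2 * g).
Proof.
move=> _ _ girthE noH C /tensorH_contract_cycle [c cc sc].
exact: leq_trans (bip_prod_girth girthE noH cc) sc.
Qed.
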